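(* Consider the structured private pooled-sequencing scheme with constant coverage depth described in the context, with $M$ unknown and $M$ known individuals. Let $\beta\in(0,1)$. If $M\geq 1/\beta$, then the privacy condition $$\frac{I\left(X_{m,n},\ m\in\{0,\dots,M-1\},\ n\in[N];\ \mathcal{R}\right)}{MN}\leq\beta$$ holds, where $\mathcal{R}$ is the set of reads available to the sequencer.
   Context: Setting. Each genome is described by $N$ SNP positions with binary values. There are $M$ ''unknown'' individuals $m\in\{0,\dots,M-1\}$ with SNP matrix $\mathbf{X}\in\{0,1\}^{M\times N}$ whose entries $X_{m,n}$ are mutually independent (with arbitrary allele-frequency priors), and $M$ ''known'' individuals $k\in\{0,\dots,M-1\}$ with SNP matrix $\mathbf{Y}\in\{0,1\}^{M\times N}$ whose entries are i.i.d. uniform on $\{0,1\}$ and independent of $\mathbf{X}$; $\mathbf{Y}$ is known to a trusted data collector but unknown to the sequencer. Genomes are sheared into fragments, each containing at most one SNP and mappable unambiguously to its SNP position. All fragments are pooled without individual labels and sent to the sequencer, which reads them, each SNP read being flipped independently with probability $\eta\in(0,1/2)$; $\mathcal{R}$ is the resulting set of reads. In the structured scheme with constant coverage depth, at every SNP position $n$ unknown individual $m$ contributes exactly $2^m\alpha_0$ fragments and known individual $k$ contributes exactly $2^k\alpha_0$ fragments, $\alpha_0\in\mathbb{N}$. Hence for each position $n$ the sequencer's information is the count of read 1's among fragments covering $n$ (modeled, after normalization, as $q_n=\sum_{m=0}^{M-1}2^m(X_{m,n}+Y_{m,n})+\tilde Z_n$ with Gaussian noise $\tilde Z_n$ independent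 of $\mathbf{X},\mathbf{Y}$). *)

From HB Require Import structures.
From mathcomp Require Import all_boot all_order all_algebra.
From mathcomp Require Import reals exp.
Set Implicit Arguments. Unset Strict Implicit. Unset Printing Implicit Defensive.
Import Order.TTheory GRing.Theory Num.Theory.
Local Open Scope ring_scope.

Definition mutual_info {R : realType} {A B : finType} (P : A -> B -> R) : R :=
  \sum_(a : A) \sum_(b : B)
    (if P a b == 0 then 0
     else P a b * (ln (P a b / ((\sum_(b' : B) P a b') * (\sum_(a' : A) P a' b)))
                   / ln 2)).

(* SNP matrices: entry (m, n) = SNP n of individual m. *)
Definition snp_mat (M N : nat) := {ffun 'I_M * 'I_N -> bool}.

Definition prior {R : realType} (M N : nat) (p : 'I_M * 'I_N -> R)
  (x : snp_mat M N) : R :=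
  \prod_(i : 'I_M * 'I_N) (if x i then p i else 1 - p i).

(* Law of the known matrix Y: i.i.d. uniform bits. *)
Definition unif_prob {R : realType} (M N : nat) : R := (2 ^+ (M * N))^-1.

(* Number of fragments carrying allele 1 at position n (before read errors):
   unknown m contributes 2^m alpha0 fragments, known k contributes 2^k alpha0. *)
Definition ones_at (M N alpha0 : nat) (x y : snp_mat M N) (n : 'I_N) : nat :=
  alpha0 * \sum_(m < M) 2 ^ m * (x (m, n) + y (m, n)).

Definition depth (M alpha0 : nat) : nat := 2 * alpha0 * (2 ^ M - 1).

(* Independent read-flip indicators, one for each fragment f at each position n. *)
Definition flips (M N alpha0 : nat) := {ffun 'I_N * 'I_(depth M alpha0) -> bool}.

Definition flip_prob {R : realType} (M N alpha0 : nat) (eta : R)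
  (e : flips M N alpha0) : R :=
  \prod_(i : 'I_N * 'I_(depth M alpha0)) (if e i then eta else 1 - eta).

(* The sequencer's observation (the pooled reads R): for each position n,
   the number of reads equal to 1.  Fragments at position n are listed so that
   the first [ones_at .. n] of them carry allele 1; the read of fragment f is its
   allele xor the flip e (n, f). *)
Definition obs_space (M N alpha0 : nat) := {ffun 'I_N -> 'I_(depth M alpha0).+1}.

Definition read_counts (M N alpha0 : nat) (x y : snp_mat M N)
  (e : flips M N alpha0) : obs_space M N alpha0 :=
  [ffun n => inord #|[set f : 'I_(depth M alpha0) |
                       (f < ones_at alpha0 x y n)%N (+) e (n, f)]|].

Definition joint_XR {R : realType} (M N alpha0 : nat) (p : 'I_M * 'I_N -> R)
  (eta : R) (x : snp_mat M N) (r : obs_space M N alpha0) : R :=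
  \sum_(y : snp_mat M N) \sum_(e : flips M N alpha0)
    (if read_counts x y e == r
     then prior p x * @unif_prob R M N * flip_prob eta e else 0).

From HB Require Import structures.
From mathcomp Require Import all_boot all_order all_algebra.
From mathcomp Require Import reals exp.
From mathcomp Require Import ring lra zify.
Set Implicit Arguments. Unset Strict Implicit. Unset Printing Implicit Defensive.
Import Order.TTheory GRing.Theory Num.Theory.
Local Open Scope ring_scope.

(* At position n the sequencer only sees noisy reads of the weight
   w_n = sum_m 2^m (X_{m,n} + Y_{m,n}) < 2^(M+1).  For fixed X the map Y |-> w
   is injective (binary expansions are unique), so averaging over the uniform
   mask Y gives P(x, r) <= 2^((M+1)N) / 2^(MN) * P(x) T(r) = 2^N P(x) T(r),
   where T is the law of the reads under a uniform weight vector.  A joint law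
   dominated by c times a product of its first marginal with a subprobability
   has mutual information at most log2 c, here N bits, i.e. 1/M <= beta bits
   per unknown SNP. *)

Lemma ln_le_subr1 (R : realType) (z : R) : 0 < z -> ln z <= z - 1.
Proof.
move=> z_gt0; have := @le_ln1Dx R (z - 1); rewrite [1 + _]addrC subrK; apply.
by rewrite ltrBrDl addrN.
Qed.

Lemma ln2_gt0 (R : realType) : 0 < ln (2 : R).
Proof. by apply: ln_gt0; rewrite ltr1n. Qed.

Lemma eq_mutual_info (R : realType) (A B : finType) (P Q : A -> B -> R) :
  P =2 Q -> mutual_info P = mutual_info Q.
Proof.
move=> PQ; apply: eq_bigr => a _; apply: eq_bigr => b _.
by rewrite !PQ; congr (if _ then _ else _ * (ln (_ / (_ * _)) / _));
  apply: eq_bigr => ? _; rewrite PQ.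
Qed.

Lemma sum_mul_ln_ratio_le (R : realType) (B : finType) (Q T : B -> R) :
  (forall b, 0 <= Q b) -> (forall b, 0 <= T b) -> (forall b, 0 < Q b -> 0 < T b) ->
  \sum_b Q b * ln (T b / Q b) <= \sum_b T b - \sum_b Q b.
Proof.
move=> Q_ge0 T_ge0 QT; rewrite -sumrB; apply: ler_sum => b _.
have [Q0 | Q_neq0] := eqVneq (Q b) 0; first by rewrite Q0 mul0r subr0.
have Q_gt0 : 0 < Q b by rewrite lt_def Q_neq0 Q_ge0.
have := ln_le_subr1 (divr_gt0 (QT _ Q_gt0) Q_gt0).
move/(ler_wpM2l (ltW Q_gt0))/le_trans; apply.
by rewrite mulrBr mulr1 mulrCA divff ?gt_eqF ?mulr1.
Qed.

Section MutualInfoDomination.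
Variables (R : realType) (A B : finType) (P : A -> B -> R) (T : B -> R) (c : R).
Hypotheses (P_ge0 : forall a b, 0 <= P a b) (T_ge0 : forall b, 0 <= T b).
Hypotheses (P_sum1 : \sum_a \sum_b P a b = 1) (T_sum_le1 : \sum_b T b <= 1).
Hypothesis P_dominated : forall a b, P a b <= c * (\sum_b' P a b') * T b.

Lemma T_gt0_of_marginal_gt0 b : 0 < \sum_a P a b -> 0 < T b.
Proof.
move=> col_gt0; rewrite lt_def T_ge0 andbT; apply: contraTneq col_gt0 => Tb0.
rewrite -leNgt big1 // => a _; apply/eqP; rewrite eq_le P_ge0 andbT.
by have := P_dominated a b; rewrite Tb0 mulr0.
Qed.

Lemma mutual_info_term_le a b :
  (if P a b == 0 then 0
   else P a b * (ln (P a b / ((\sum_b' P a b') * (\sum_a' P a' b))) / ln 2))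
  <= (P a b * ln c + P a b * ln (T b / \sum_a' P a' b)) / ln 2.
Proof.
have [-> | Pab_neq0] := eqVneq (P a b) 0; first by rewrite !mul0r addr0 mul0r.
have Pab_gt0 : 0 < P a b by rewrite lt_def Pab_neq0 P_ge0.
have row_gt0 : 0 < \sum_b' P a b'.
  by apply: lt_le_trans Pab_gt0 _; rewrite (bigD1 b) //= lerDl sumr_ge0.
have col_gt0 : 0 < \sum_a' P a' b.
  by apply: lt_le_trans Pab_gt0 _; rewrite (bigD1 a) //= lerDl sumr_ge0.
have Tb_gt0 := T_gt0_of_marginal_gt0 col_gt0.
have c_gt0 : 0 < c.
  by rewrite -(pmulr_lgt0 _ row_gt0) -(pmulr_lgt0 _ Tb_gt0) (lt_le_trans Pab_gt0).
rewrite mulrA ler_pM2r ?invr_gt0 ?ln2_gt0 // -mulrDr ler_pM2l //.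
rewrite [X in ln X](_ : _ = P a b / ((\sum_b' P a b') * T b) * (T b / \sum_a' P a' b));
  last by field; rewrite ?gt_eqF.
rewrite lnM ?posrE ?divr_gt0 ?mulr_gt0 // lerD2r.
rewrite ler_ln ?posrE ?divr_gt0 ?mulr_gt0 // ler_pdivrMr ?mulr_gt0 //.
by rewrite mulrA.
Qed.

Lemma mutual_info_le_ln : mutual_info P <= ln c / ln 2.
Proof.
rewrite /mutual_info.
apply: le_trans (ler_sum _ (fun a _ => ler_sum _ (fun b _ => mutual_info_term_le a b))) _.
under eq_bigr do rewrite -mulr_suml.
rewrite -mulr_suml ler_pM2r ?invr_gt0 ?ln2_gt0 //.
under eq_bigr do rewrite big_split /= -mulr_suml.
rewrite big_split /= -mulr_suml P_sum1 mul1r gerDl exchange_big /=.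
under eq_bigr do rewrite -mulr_suml.
apply: le_trans (sum_mul_ln_ratio_le _ T_ge0 T_gt0_of_marginal_gt0) _.
  by move=> b; apply: sumr_ge0.
by rewrite subr_le0 exchange_big /= P_sum1.
Qed.

End MutualInfoDomination.

Definition pushforward (R : realType) (E O : finType) (q : E -> R) (f : E -> O)
  (o : O) : R :=
  \sum_e (if f e == o then q e else 0).

Lemma pushforward_ge0 (R : realType) (E O : finType) (q : E -> R) (f : E -> O) o :
  (forall e, 0 <= q e) -> 0 <= pushforward q f o.
Proof. by move=> q_ge0; apply: sumr_ge0 => e _; case: ifP. Qed.

Lemma sum_pushforward (R : realType) (E O : finType) (q : E -> R) (f : E -> O) :
  \sum_o pushforward q f o = \sum_e q e.
Proof.
rewrite exchange_big /=; apply: eq_bigr => e _.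
by rewrite (bigD1 (f e)) //= eqxx big1 ?addr0 // => o /negbTE; rewrite eq_sym => ->.
Qed.

Lemma bernoulli_prod_ge0 (R : realType) (I : finType) (q : I -> R)
    (f : {ffun I -> bool}) :
  (forall i, 0 <= q i <= 1) -> 0 <= \prod_i (if f i then q i else 1 - q i).
Proof.
move=> q01; apply: prodr_ge0 => i _; have /andP[q_ge0 q_le1] := q01 i.
by case: (f i); rewrite ?subr_ge0.
Qed.

Lemma sum_bernoulli_prod (R : realType) (I : finType) (q : I -> R) :
  \sum_(f : {ffun I -> bool}) \prod_i (if f i then q i else 1 - q i) = 1.
Proof.
rewrite -(bigA_distr_bigA (fun i (b : bool) => if b then q i else 1 - q i)) /=.
by apply: big1 => i _; rewrite big_bool /= addrC subrK.
Qed.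

Section InjectiveMask.
Variables (R : realType) (X Y W O : finType).
Variables (pi : X -> R) (K : W -> O -> R) (g : X -> Y -> W).
Hypotheses (pi_ge0 : forall x, 0 <= pi x) (pi_sum1 : \sum_x pi x = 1).
Hypotheses (K_ge0 : forall w o, 0 <= K w o) (K_sum1 : forall w, \sum_o K w o = 1).
Hypotheses (g_inj : forall x, injective (g x)) (Y_gt0 : (0 < #|Y|)%N).

Definition masked_joint (x : X) (o : O) : R :=
  pi x * #|Y|%:R^-1 * \sum_y K (g x y) o.

Definition uniform_output (o : O) : R := #|W|%:R^-1 * \sum_w K w o.

Lemma masked_joint_ge0 x o : 0 <= masked_joint x o.
Proof. by rewrite !mulr_ge0 ?invr_ge0 ?sumr_ge0. Qed.

Lemma sum_masked_joint x : \sum_o masked_joint x o = pi x.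
Proof.
rewrite -mulr_sumr exchange_big /=; under eq_bigr do rewrite K_sum1.
by rewrite sumr_const -mulrA mulVf ?mulr1 // pnatr_eq0 -lt0n.
Qed.

Lemma card_codomain_gt0 : (0 < #|W|)%N.
Proof.
case: (pickP (@predT X)) => [x _ | noX].
  exact: leq_trans Y_gt0 (leq_card _ (@g_inj x)).
by move: pi_sum1; rewrite big_pred0 // => /eqP; rewrite eq_sym oner_eq0.
Qed.

Lemma sum_uniform_output : \sum_o uniform_output o = 1.
Proof.
rewrite -mulr_sumr exchange_big /=; under eq_bigr do rewrite K_sum1.
by rewrite sumr_const mulVf // pnatr_eq0 -lt0n card_codomain_gt0.
Qed.

Lemma masked_joint_dominated x o :
  masked_joint x o <=
    #|W|%:R / #|Y|%:R * (\sum_o' masked_joint x o') * uniform_output o.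
Proof.
rewrite sum_masked_joint /masked_joint /uniform_output.
rewrite [leRHS](_ : _ = pi x * #|Y|%:R^-1 * \sum_w K w o); last first.
  by field; rewrite !pnatr_eq0 -!lt0n card_codomain_gt0 Y_gt0.
rewrite ler_wpM2l ?mulr_ge0 ?invr_ge0 //.
have -> : \sum_y K (g x y) o = \sum_(w in g x @: setT) K w o.
  rewrite big_imset /=; last exact: in2W (@g_inj x).
  by apply: eq_bigl => y; rewrite inE.
rewrite [leLHS]big_mkcond /=; apply: ler_sum => w _.
by case: ifP => // _; apply: K_ge0.
Qed.

Lemma mutual_info_masked_joint :
  mutual_info masked_joint <= ln (#|W|%:R / #|Y|%:R) / ln 2.
Proof.
apply: mutual_info_le_ln masked_joint_dominated.
- exact: masked_joint_ge0.
- by move=> o; rewrite mulr_ge0 ?invr_ge0 ?sumr_ge0.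
- by under eq_bigr do rewrite sum_masked_joint.
- by rewrite sum_uniform_output.
Qed.

End InjectiveMask.

Lemma sum_pow2_bits_lt n (b : 'I_n -> bool) : (\sum_(m < n) 2 ^ m * b m < 2 ^ n)%N.
Proof.
elim: n b => [|n IHn] b; first by rewrite big_ord0.
rewrite big_ord_recr /= expnS.
by have := IHn (fun m => b (widen_ord (leqnSn n) m)); case: (b ord_max) => /=; lia.
Qed.

Lemma sum_pow2_bits_inj n (b c : 'I_n -> bool) :
  (\sum_(m < n) 2 ^ m * b m)%N = (\sum_(m < n) 2 ^ m * c m)%N -> b =1 c.
Proof.
elim: n b c => [|n IHn] b c; first by move=> _ [].
rewrite !big_ord_recl /=.
under eq_bigr do rewrite /bump add1n expnS -mulnA.
under [in RHS]eq_bigr do rewrite /bump add1n expnS -mulnA.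
rewrite -!big_distrr /= !expn0 !mul1n.
set sb := (\sum_(i < n) _)%N; set sc := (\sum_(i < n) _)%N => eq_sums.
have [eq_b0 eq_tail] : b ord0 = c ord0 /\ sb = sc.
  by move: eq_sums; case: (b ord0); case: (c ord0) => /= ?; split => //; lia.
by move=> i; case: (unliftP ord0 i) => [j ->|->] //; exact: (IHn _ _ eq_tail j).
Qed.

Section PooledSequencing.
Variables (M N alpha0 : nat).

Definition pooled_weight (x y : snp_mat M N) (n : 'I_N) : nat :=
  \sum_(m < M) 2 ^ m * (x (m, n) + y (m, n)).

Lemma pooled_weight_lt x y n : (pooled_weight x y n < 2 ^ M.+1)%N.
Proof.
rewrite /pooled_weight; under eq_bigr do rewrite mulnDr.
rewrite big_split /= expnS mul2n -addnn.
have /= := sum_pow2_bits_lt (fun m => x (m, n)).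
by have /= := sum_pow2_bits_lt (fun m => y (m, n)); lia.
Qed.

Definition weight_space := {ffun 'I_N -> 'I_(2 ^ M.+1)}.

Definition pooled_weights (x y : snp_mat M N) : weight_space :=
  [ffun n => Ordinal (pooled_weight_lt x y n)].

Lemma pooled_weights_inj x : injective (pooled_weights x).
Proof.
move=> y y' /ffunP eq_w; apply/ffunP => -[m n].
have := eq_w n; rewrite !ffunE => -[]; rewrite /pooled_weight.
under eq_bigr do rewrite mulnDr.
under [in RHS]eq_bigr do rewrite mulnDr.
rewrite !big_split /= => /addnI /sum_pow2_bits_inj; apply.
Qed.

Definition reads_of_weights (w : weight_space) (e : flips M N alpha0) :
  obs_space M N alpha0 :=
  [ffun n => inord #|[set f : 'I_(depth M alpha0) |
                       (f < alpha0 * w n)%N (+) e (n, f)]|].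

Lemma read_counts_pooled_weights x y e :
  read_counts x y e = reads_of_weights (pooled_weights x y) e.
Proof. by apply/ffunP => n; rewrite !ffunE. Qed.

Lemma card_snp_mat : #|snp_mat M N| = (2 ^ (M * N))%N.
Proof. by rewrite card_ffun card_bool card_prod !card_ord. Qed.

Lemma card_weight_space : #|weight_space| = (2 ^ N * 2 ^ (M * N))%N.
Proof. by rewrite card_ffun !card_ord -expnM mulSn expnD. Qed.

Variables (R : realType) (p : 'I_M * 'I_N -> R) (eta : R).
Hypotheses (p01 : forall i, 0 <= p i <= 1) (eta01 : 0 <= eta <= 1).

Definition read_kernel (w : weight_space) : obs_space M N alpha0 -> R :=
  pushforward (@flip_prob R M N alpha0 eta) (reads_of_weights w).

Lemma joint_XR_masked :
  @joint_XR R M N alpha0 p eta =2 masked_joint (prior p) read_kernel pooled_weights.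
Proof.
move=> x r; rewrite /joint_XR /masked_joint /unif_prob card_snp_mat natrX mulr_sumr.
apply: eq_bigr => y _; rewrite /read_kernel /pushforward mulr_sumr.
apply: eq_bigr => e _.
by rewrite read_counts_pooled_weights; case: ifP; rewrite ?mulr0.
Qed.

Lemma mutual_info_joint_XR_le : mutual_info (@joint_XR R M N alpha0 p eta) <= N%:R.
Proof.
rewrite (eq_mutual_info joint_XR_masked).
apply: le_trans (mutual_info_masked_joint _ _ _ _ _ _) _.
- by move=> x; apply: bernoulli_prod_ge0.
- exact: sum_bernoulli_prod.
- by move=> w r; apply: pushforward_ge0 => e; apply: bernoulli_prod_ge0 => _.
- by move=> w; rewrite sum_pushforward (sum_bernoulli_prod (fun=> eta)).
- exact: pooled_weights_inj.
- by rewrite card_snp_mat expn_gt0.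
rewrite card_weight_space card_snp_mat natrM mulfK ?pnatr_eq0 ?expn_eq0 //.
rewrite natrX lnXn // -(mulr_natr (ln 2)) mulrAC divff ?mul1r //.
by rewrite gt_eqF ?ln2_gt0.
Qed.

End PooledSequencing.

Theorem theorem2 (R : realType) (M N alpha0 : nat) (beta eta : R)
    (p : 'I_M * 'I_N -> R) :
  0 < beta < 1 ->
  0 < eta < 1 / 2 ->
  (forall i, 0 <= p i <= 1) ->
  1 / beta <= M%:R ->
  mutual_info (@joint_XR R M N alpha0 p eta) / (M * N)%:R <= beta.
Proof.
move=> /andP[beta_gt0 _] /andP[eta_gt0 eta_lt_half] p01 M_ge.
have eta01 : 0 <= eta <= 1 by apply/andP; split; lra.
have M_gt0 : 0 < M%:R :> R by apply: lt_le_trans M_ge; rewrite divr_gt0.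
have [N0 | N_neq0] := eqVneq N 0%N.
  by rewrite (_ : (M * N)%:R = 0) ?invr0 ?mulr0 ?ltW // N0 muln0.
have N_gt0 : 0 < N%:R :> R by rewrite ltr0n lt0n.
apply: le_trans (_ : N%:R / (M * N)%:R <= beta).
  by rewrite ler_wpM2r ?invr_ge0 ?mutual_info_joint_XR_le.
rewrite natrM invfM mulrCA divff ?gt_eqF // mulr1 -[_^-1]mul1r.
by rewrite ler_pdivrMr // mulrC -ler_pdivrMr.
Qed.
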